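(* Let $\mathcal H$ be a separable Hilbert space and let $\Phi:B(\mathcal H)\to B(\mathcal H)$ be a quantum channel with Kraus representation $\Phi(A)=\sum_{k\ge1}V_k^*AV_k$, $V_k\in B(\mathcal H)$, $\sum_kV_k^*V_k=I$. Then the multiplicative domain of $\Phi$ satisfies \[ \mathcal M(\Phi)=\{V_jV_k^*:\ j,k=1,2,\dots\}'. \]
   Context: A quantum channel is a unital normal completely positive map $\Phi:B(\mathcal H)\to B(\mathcal H)$. The multiplicative domain is $\mathcal M(\Phi)=\{A\in B(\mathcal H): \Phi(A^*A)=\Phi(A)^*\Phi(A),\ \Phi(AA^* )=\Phi(A)\Phi(A)^*\}$. $'$ denotes the commutant. *)

From mathcomp Require Import all_boot all_algebra.
From mathcomp Require Import complex.
From mathcomp Require Import all_classical all_reals.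
Set Implicit Arguments. Unset Strict Implicit. Unset Printing Implicit Defensive.
Import GRing.Theory Num.Theory.
Local Open Scope ring_scope.

Record preHilbert (R : realType) := PreHilbert {
  hsort :> lmodType R[i];
  ip : hsort -> hsort -> R[i];
  ip_linear : forall (x : hsort) (a : R[i]) (y z : hsort),
      ip x (a *: y + z) = a * ip x y + ip x z;
  ip_conj : forall x y : hsort, ip y x = (ip x y)^*;
  ip_ge0 : forall x : hsort, 0 <= ip x x;
  ip_eq0 : forall x : hsort, ip x x = 0 -> x = 0
}.

Section Hilbert.
Variables (R : realType) (H : preHilbert R).

Definition hnorm (x : H) : R := Num.sqrt (complex.Re (ip x x)).

Definition hconv (u : nat -> H) (x : H) : Prop :=
  forall e : R, 0 < e -> exists N : nat, forall n : nat, (N <= n)%N -> hnorm (u n - x) < e.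

Definition hcauchy (u : nat -> H) : Prop :=
  forall e : R, 0 < e -> exists N : nat, forall m n : nat,
      (N <= m)%N -> (N <= n)%N -> hnorm (u m - u n) < e.

Definition hcomplete : Prop := forall u : nat -> H, hcauchy u -> exists x, hconv u x.

Definition hseparable : Prop :=
  exists d : nat -> H, forall (x : H) (e : R), 0 < e -> exists n, hnorm (x - d n) < e.

Definition bounded_op (A : H -> H) : Prop :=
  (forall (a : R[i]) (x y : H), A (a *: x + y) = a *: A x + A y) /\
  exists M : R, forall x : H, hnorm (A x) <= M * hnorm x.

Definition is_adjoint (A B : H -> H) : Prop := forall x y : H, ip (A x) y = ip x (B y).

(* the adjoint A^* (exists and is unique for bounded A on a Hilbert space) *)
Definition adj (A : H -> H) : H -> H :=
  match boolp.pselect (exists B, is_adjoint A B) with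
  | left h => proj1_sig (boolp.cid h)
  | right _ => A
  end.

(* Phi(A) = sum_k V_k^* A V_k, with the series converging strongly, where the
   Kraus operators V_k are bounded and sum_k V_k^* V_k = I (strongly). *)
Definition kraus_rep (V : nat -> H -> H) (Phi : (H -> H) -> (H -> H)) : Prop :=
  [/\ forall k, bounded_op (V k),
      forall x : H, hconv (fun n => \sum_(k < n) adj (V k) (V k x)) x &
      forall A, bounded_op A -> forall x : H,
          hconv (fun n => \sum_(k < n) adj (V k) (A (V k x))) (Phi A x)].

Definition mult_domain (Phi : (H -> H) -> (H -> H)) (A : H -> H) : Prop :=
  bounded_op A /\
  Phi (adj A \o A) = adj (Phi A) \o Phi A /\
  Phi (A \o adj A) = Phi A \o adj (Phi A).

Definition commutant (S : (H -> H) -> Prop) (A : H -> H) : Prop :=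
  bounded_op A /\ forall T, S T -> A \o T = T \o A.

End Hilbert.

(* Phi(B)^* = Phi(B^* ) for bounded B, adjoints of bounded operators being given by
   the Riesz representation theorem.  If Phi(B^* B) = Phi(B)^* Phi(B), the series of
   nonnegative terms sum_k ||B V_k x - V_k Phi(B) x||^2 adds up to
   <x, Phi(B^* B) x> - ||Phi(B) x||^2 = 0, so B V_k = V_k Phi(B) for all k.  For A in
   the multiplicative domain this holds for B = A and B = A^*, and the adjoint of the
   second relation, V_k^* A = Phi(A) V_k^*, gives A V_j V_k^* = V_j Phi(A) V_k^* =
   V_j V_k^* A.  Conversely, if A commutes with every V_j V_k^* then so does A^*, the
   family being closed under adjoints, and inserting sum_j V_j^* V_j = I gives
   B V_k = V_k (sum_j V_j^* B V_j) = V_k Phi(B) for B = A, A^*; summing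
   V_k^* C B V_k = V_k^* C V_k Phi(B) then yields Phi(C B) = Phi(C) Phi(B). *)

From HB Require Import structures.
From mathcomp Require Import all_boot all_algebra.
From mathcomp Require Import complex.
From mathcomp Require Import all_classical all_reals.
From mathcomp Require Import ring lra.
Import GRing.Theory Num.Theory order.Order.TTheory.
Set Implicit Arguments.
Unset Strict Implicit.
Unset Printing Implicit Defensive.
Local Open Scope ring_scope.

Section InnerProduct.
Variables (R : realType) (H : preHilbert R).
Implicit Types (x y z : H) (a : R[i]).

HB.instance Definition _ x :=
  GRing.isLinear.Build R[i] H R[i] *%R (ip x) (ip_linear x).

Lemma ipDl x y z : ip (x + y) z = ip x z + ip y z.
Proof. by rewrite ip_conj raddfD rmorphD /= -!ip_conj. Qed.

Lemma ipZl a x y : ip (a *: x) y = a^* * ip x y.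
Proof. by rewrite ip_conj linearZ rmorphM /= -ip_conj. Qed.

Lemma ip0l y : ip 0 y = 0.
Proof. by rewrite ip_conj raddf0 rmorph0. Qed.

Lemma ipBl x y z : ip (x - y) z = ip x z - ip y z.
Proof. by rewrite ip_conj raddfB rmorphB /= -!ip_conj. Qed.

Lemma Re_conj a : complex.Re a^* = complex.Re a.
Proof. by case: a. Qed.

Lemma ip_self x : ip x x = (hnorm x ^+ 2)%:C%C.
Proof.
rewrite /hnorm; have := ip_ge0 x; have := ip_conj x x.
case: (ip x x) => p q [qN]; rewrite lecE /= => /andP[_ p0].
have -> : q = 0 by lra.
by rewrite sqr_sqrtr.
Qed.

Lemma hnorm_ge0 x : 0 <= hnorm x.
Proof. exact: sqrtr_ge0. Qed.

Lemma hnorm_eq0 x : hnorm x = 0 -> x = 0.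
Proof. by move=> x0; apply: ip_eq0; rewrite ip_self x0 expr0n. Qed.

Lemma hnorm0 : hnorm (0 : H) = 0.
Proof. by rewrite /hnorm raddf0 sqrtr0. Qed.

Lemma hnorm_sqr x : hnorm x ^+ 2 = complex.Re (ip x x).
Proof. by rewrite ip_self. Qed.

Lemma hnormDZ_sqr x y a :
  hnorm (x + a *: y) ^+ 2 = hnorm x ^+ 2 + 2 * complex.Re (a * ip x y)
                             + (complex.Re a ^+ 2 + complex.Im a ^+ 2) * hnorm y ^+ 2.
Proof.
rewrite hnorm_sqr !ipDl !raddfD /= !linearZ /= !ipZl (ip_conj x y) !ip_self.
rewrite -rmorphM /= Re_conj.
by case: a => a1 a2 /=; ring.
Qed.

Lemma hnormD_sqr x y :
  hnorm (x + y) ^+ 2 = hnorm x ^+ 2 + 2 * complex.Re (ip x y) + hnorm y ^+ 2.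
Proof. by rewrite -[y in LHS]scale1r hnormDZ_sqr mul1r /=; ring. Qed.

Lemma parallelogram x y :
  hnorm (x + y) ^+ 2 + hnorm (x - y) ^+ 2 = 2 * hnorm x ^+ 2 + 2 * hnorm y ^+ 2.
Proof.
rewrite -scaleN1r hnormDZ_sqr hnormD_sqr mulN1r raddfN /=; ring.
Qed.

Lemma hnormZ_real (r : R) x : hnorm (r%:C%C *: x) = `|r| * hnorm x.
Proof.
rewrite -[_ *: x]add0r; apply/eqP; rewrite -(eqrXn2 (n := 2)) ?mulr_ge0 ?hnorm_ge0 //.
rewrite hnormDZ_sqr hnorm0 ip0l mulr0 /= expr0n /= addr0 exprMn.
by rewrite real_normK ?num_real // mulr0 !add0r.
Qed.

Lemma hnormN x : hnorm (- x) = hnorm x.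
Proof. by rewrite -scaleN1r -(rmorphN1 (real_complex R)) hnormZ_real normrN1 mul1r. Qed.

Lemma cauchy_schwarz x y :
  complex.Re (ip x y) ^+ 2 + complex.Im (ip x y) ^+ 2 <= (hnorm x * hnorm y) ^+ 2.
Proof.
have [->|y0] := eqVneq y 0; first by rewrite raddf0 hnorm0 mulr0 /= expr0n /= addr0.
have N0 : 0 < hnorm y ^+ 2.
  by rewrite exprn_gt0 // lt_def hnorm_ge0 andbT; apply: contra_neq y0; apply: hnorm_eq0.
set N := hnorm y ^+ 2 in N0 *.
rewrite exprMn -/N.
(* expand 0 <= ||x + a y||^2 with a = - <x, y>^* / ||y||^2 *)
move: (sqr_ge0 (hnorm (x + ((- complex.Re (ip x y) / N) +i* (complex.Im (ip x y) / N))%C *: y))).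
rewrite hnormDZ_sqr -/N.
case: (ip x y) => p q /= h.
have e : N * (hnorm x ^+ 2 + 2 * (- p / N * p - q / N * q) + ((- p / N) ^+ 2 + (q / N) ^+ 2) * N)
   = N * hnorm x ^+ 2 - (p ^+ 2 + q ^+ 2) by field; lra.
by have := mulr_ge0 (ltW N0) h; rewrite e; lra.
Qed.

Lemma Re_ip_le x y : complex.Re (ip x y) <= hnorm x * hnorm y.
Proof.
have := cauchy_schwarz x y; have := mulr_ge0 (hnorm_ge0 x) (hnorm_ge0 y).
have := sqr_ge0 (complex.Im (ip x y)); nra.
Qed.

Lemma normr_ip_le x y : `|ip x y| <= (hnorm x * hnorm y)%:C%C.
Proof.
rewrite -(@ler_pXn2r _ 2) ?nnegrE ?normr_ge0 ?ler0c ?mulr_ge0 ?hnorm_ge0 //.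
by rewrite -add_Re2_Im2 -rmorphXn lecR cauchy_schwarz.
Qed.

Lemma ip_ext x y : (forall z, ip z x = ip z y) -> x = y.
Proof. by move=> e; apply/eqP; rewrite -subr_eq0; apply/eqP/ip_eq0; rewrite raddfB /= e subrr. Qed.

Lemma min_norm_orthogonal x y :
  (forall t : R[i], hnorm x ^+ 2 <= hnorm (x + t *: y) ^+ 2) -> ip x y = 0.
Proof.
move=> xmin; pose N := hnorm y ^+ 2; pose s := (N + 1)^-1.
have N0 : 0 <= N by apply: sqr_ge0.
have s0 : 0 < s by rewrite invr_gt0; lra.
have sN : s * N <= 1 by rewrite mulrC ler_pdivrMr; lra.
(* t = - s <x, y>^* makes ||x + t y||^2 = ||x||^2 - s |<x, y>|^2 (2 - s N) *)
move: (xmin ((- s * complex.Re (ip x y)) +i* (s * complex.Im (ip x y)))%C).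
rewrite hnormDZ_sqr -/N; case: (ip x y) => p q /= h.
have P0 : s * (p ^+ 2 + q ^+ 2) <= 0.
  have := mulr_ge0 (ltW s0) (addr_ge0 (sqr_ge0 p) (sqr_ge0 q)); nra.
have [p0 q0] : p = 0 /\ q = 0.
  by rewrite pmulr_rle0 // in P0; split; apply/eqP; rewrite -sqrf_eq0 eq_le sqr_ge0 andbT; nra.
by rewrite p0 q0.
Qed.

End InnerProduct.

Section Convergence.
Variables (R : realType) (H : preHilbert R).
Implicit Types (u v : nat -> R[i]) (l m : R[i]).

Definition cconv u l : Prop :=
  forall e : R, 0 < e -> exists N : nat, forall n, (N <= n)%N -> `|u n - l| < e%:C%C.

Lemma eq_cconv u v l : u =1 v -> cconv u l -> cconv v l.
Proof. by move=> uv ul e /ul[N uN]; exists N => n /uN; rewrite uv. Qed.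

Lemma cconv_cst l : cconv (fun=> l) l.
Proof. by move=> e e0; exists 0%N => n _; rewrite subrr normr0 ltcR. Qed.

Lemma normC_small_eq0 l : (forall e : R, 0 < e -> `|l| < e%:C%C) -> l = 0.
Proof.
move=> small; apply/eqP/normr0P; rewrite -(RRe_real (normr_real l)).
have r0 : 0 <= complex.Re `|l| by rewrite -ler0c RRe_real ?normr_real.
suff -> : complex.Re `|l| = 0 by [].
apply/eqP; rewrite eq_le r0 andbT; apply/ler_addgt0Pr => e e0; rewrite add0r.
by rewrite ltW // -ltcR RRe_real ?normr_real ?small.
Qed.

Lemma cconv_unique u l m : cconv u l -> cconv u m -> l = m.
Proof.
move=> ul um; apply/eqP; rewrite -subr_eq0; apply/eqP/normC_small_eq0 => e e0.
have [N1 uN1] := ul _ (divr_gt0 e0 (ltr0Sn _ 1)); have [N2 uN2] := um _ (divr_gt0 e0 (ltr0Sn _ 1)).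
pose n := maxn N1 N2; rewrite -(subrKA (u n)) (splitr e) rmorphD.
apply: le_lt_trans (ler_normD _ _) _; rewrite distrC.
by apply: ltrD; [apply: uN1; rewrite leq_maxl | apply: uN2; rewrite leq_maxr].
Qed.

Lemma cconvD u v l m : cconv u l -> cconv v m -> cconv (fun n => u n + v n) (l + m).
Proof.
move=> ul vm e e0.
have [N1 uN1] := ul _ (divr_gt0 e0 (ltr0Sn _ 1)); have [N2 vN2] := vm _ (divr_gt0 e0 (ltr0Sn _ 1)).
exists (maxn N1 N2) => n; rewrite geq_max => /andP[n1 n2].
rewrite opprD addrACA (splitr e) rmorphD; apply: le_lt_trans (ler_normD _ _) _.
by apply: ltrD; [apply: uN1 | apply: vN2].
Qed.

Lemma cconvN u l : cconv u l -> cconv (fun n => - u n) (- l).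
Proof. by move=> ul e /ul[N uN]; exists N => n /uN; rewrite -opprD normrN. Qed.

Lemma cconv_conj u l : cconv u l -> cconv (fun n => (u n)^*) l^*.
Proof. by move=> ul e /ul[N uN]; exists N => n /uN; rewrite -rmorphB norm_conjC. Qed.

Lemma sum_nneg_cconv0 (t : nat -> R) : (forall k, 0 <= t k) ->
  cconv (fun n => \sum_(k < n) (t k)%:C%C) 0 -> forall k, t k = 0.
Proof.
move=> t0 tlim k; apply/eqP; rewrite eq_le t0 andbT; apply/ler_addgt0Pr => e e0; rewrite add0r.
have [N tN] := tlim _ e0; pose n := maxn N k.+1.
have kn : (k < n)%N by rewrite leq_maxr.
have := tN n (leq_maxl _ _); rewrite subr0 -rmorph_sum ger0_norm ?ler0c ?sumr_ge0 // ltcR.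
rewrite (bigD1 (Ordinal kn)) //= => /ltW; apply: le_trans; rewrite lerDl.
exact: sumr_ge0.
Qed.

Lemma hconv_functional (g : H -> R[i]) (M : R) (u : nat -> H) (x : H) :
  (forall y z, g (y - z) = g y - g z) -> (forall y, `|g y| <= (M * hnorm y)%:C%C) ->
  hconv u x -> cconv (fun n => g (u n)) (g x).
Proof.
move=> gB gM ux e e0; have M1 : 0 < `|M| + 1 := ltr_wpDl (normr_ge0 M) ltr01.
have [N uN] := ux _ (divr_gt0 e0 M1); exists N => n /uN unx /=.
rewrite -gB; apply: le_lt_trans (gM _) _; rewrite ltcR.
apply: le_lt_trans (_ : (`|M| + 1) * hnorm (u n - x) < e); last by rewrite mulrC -ltr_pdivlMr.
by apply: ler_wpM2r; [apply: hnorm_ge0 | rewrite (le_trans (ler_norm M)) ?lerDl].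
Qed.

Lemma hconv_ip (u : nat -> H) (x w : H) : hconv u x -> cconv (fun n => ip w (u n)) (ip w x).
Proof. exact: hconv_functional (raddfB (ip w)) (normr_ip_le w). Qed.

Lemma hconv_unique (u : nat -> H) (x y : H) : hconv u x -> hconv u y -> x = y.
Proof.
by move=> ux uy; apply: ip_ext => w; apply: cconv_unique (hconv_ip w ux) (hconv_ip w uy).
Qed.

Lemma eq_hconv (u v : nat -> H) (x : H) : u =1 v -> hconv u x -> hconv v x.
Proof. by move=> uv ux e /ux[N uN]; exists N => n /uN; rewrite uv. Qed.

End Convergence.

Section Operators.
Variables (R : realType) (H : preHilbert R).
Implicit Types (A B C D : H -> H) (x y : H).

Lemma bounded_opD A : bounded_op A -> forall x y, A (x + y) = A x + A y.
Proof. by case=> lin _ x y; rewrite -[x]scale1r lin !scale1r. Qed.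

Lemma bounded_op0 A : bounded_op A -> A 0 = 0.
Proof. by move=> hA; apply: (addrI (A 0)); rewrite -bounded_opD // !addr0. Qed.

Lemma bounded_opB A : bounded_op A -> forall x y, A (x - y) = A x - A y.
Proof.
move=> hA x y; apply: (addIr (A y)); by rewrite -bounded_opD // !subrK.
Qed.

Lemma bounded_op_sum A : bounded_op A ->
  forall n (F : 'I_n -> H), A (\sum_(k < n) F k) = \sum_(k < n) A (F k).
Proof. by move=> hA n F; apply: (big_morph A (bounded_opD hA) (bounded_op0 hA)). Qed.

Lemma bounded_op_pos A : bounded_op A ->
  exists2 M, 0 < M & forall x, hnorm (A x) <= M * hnorm x.
Proof.
case=> _ [M AM]; exists (`|M| + 1) => [|x]; first exact: ltr_wpDl (normr_ge0 M) ltr01.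
apply: le_trans (AM x) _; apply: ler_wpM2r; first exact: hnorm_ge0.
by rewrite (le_trans (ler_norm M)) ?lerDl.
Qed.

Lemma bounded_op_comp A B : bounded_op A -> bounded_op B -> bounded_op (A \o B).
Proof.
move=> hA hB; split=> [a x y|] /=; first by case: hB => -> _; case: hA => ->.
have [M M0 AM] := bounded_op_pos hA; have [K _ BK] := bounded_op_pos hB.
exists (M * K) => x /=; apply: le_trans (AM _) _.
by rewrite -mulrA ler_wpM2l ?(ltW M0).
Qed.

Lemma hconv_op A (u : nat -> H) x : bounded_op A -> hconv u x -> hconv (A \o u) (A x).
Proof.
move=> hA ux e e0; have [M M0 AM] := bounded_op_pos hA.
have [N uN] := ux _ (divr_gt0 e0 M0); exists N => n /uN unx /=.
by rewrite -bounded_opB //; apply: le_lt_trans (AM _) _; rewrite mulrC -ltr_pdivlMr.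
Qed.

Lemma is_adjoint_sym A B : is_adjoint A B -> is_adjoint B A.
Proof. by move=> AB x y; rewrite ip_conj -AB -ip_conj. Qed.

Lemma is_adjoint_comp A A' B B' :
  is_adjoint A A' -> is_adjoint B B' -> is_adjoint (A \o B) (B' \o A').
Proof. by move=> AA' BB' x y /=; rewrite AA' BB'. Qed.

Lemma adjoint_comp_eq A A' B B' C C' D D' :
  is_adjoint A A' -> is_adjoint B B' -> is_adjoint C C' -> is_adjoint D D' ->
  A \o B = C \o D -> B' \o A' = D' \o C'.
Proof.
move=> AA' BB' CC' DD' ABCD; apply: funext => y; apply: ip_ext => z.
by rewrite -(is_adjoint_comp AA' BB') ABCD (is_adjoint_comp CC' DD').
Qed.

Lemma adj_eq A B : is_adjoint A B -> adj A = B.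
Proof.
rewrite /adj => AB; case: pselect => [h|[]]; last by exists B.
case: (cid h) => B' AB' /=; apply: funext => y; apply: ip_ext => z.
by rewrite -AB -AB'.
Qed.

Lemma adjoint_bounded A B : bounded_op A -> is_adjoint A B -> bounded_op B.
Proof.
move=> hA AB; split=> [a x y|].
  by apply: ip_ext => z; rewrite -AB !raddfD /= !linearZ /= -!AB.
have [M M0 AM] := bounded_op_pos hA; exists M => y.
have := Re_ip_le (A (B y)) y; rewrite AB -hnorm_sqr.
move=> /le_trans/(_ (ler_wpM2r (hnorm_ge0 y) (AM (B y)))); rewrite mulrAC.
have [By0|By0] := lerP (hnorm (B y)) 0.
  by move=> _; apply: le_trans By0 (mulr_ge0 (ltW M0) (hnorm_ge0 y)).
by rewrite expr2 ler_pM2r.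
Qed.

End Operators.

Lemma invSn_lt (R : archiFieldType) (e : R) : 0 < e ->
  exists N, forall n, (N <= n)%N -> n.+1%:R^-1 < e.
Proof.
move=> e0; exists (Num.Def.archi_bound e^-1) => n Nn.
rewrite -[e]invrK ltf_pV2 ?posrE ?ltr0Sn ?invr_gt0 //.
apply: lt_le_trans (archi_boundP _) _; first by rewrite invr_ge0 ltW.
by rewrite ler_nat; apply: leqW.
Qed.

(* The point x0 of least norm on the hyperplane [f = 1], the limit of a minimizing
   sequence that is Cauchy by the parallelogram law, is orthogonal to [ker f], so
   x0 / ||x0||^2 represents f. *)
Section Riesz.
Variables (R : realType) (H : preHilbert R).
Variable f : H -> R[i].
Hypothesis f_linear : forall a x y, f (a *: x + y) = a * f x + f y.

HB.instance Definition _ := GRing.isLinear.Build R[i] H R[i] *%R f f_linear.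

Local Open Scope classical_set_scope.

Let level_sqr := [set hnorm x ^+ 2 | x in [set x | f x = 1]].
Let d := inf level_sqr.

Let level_sqr_lbound : has_lbound level_sqr.
Proof. by exists 0 => _ [y _ <-]; apply: sqr_ge0. Qed.

Lemma level_sqr_ge x : f x = 1 -> d <= hnorm x ^+ 2.
Proof. by move=> fx; apply: ge_inf level_sqr_lbound _ _; exists x. Qed.

Lemma level_sqr_diff u v : f u = 1 -> f v = 1 ->
  hnorm (u - v) ^+ 2 <= 2 * (hnorm u ^+ 2 - d) + 2 * (hnorm v ^+ 2 - d).
Proof.
move=> fu fv; have := parallelogram u v.
have := level_sqr_ge (x := (2^-1)%:C%C *: (u + v)).
rewrite linearZ raddfD /= fu fv -rmorphD -rmorphM /= mulVf ?pnatr_eq0 // => /(_ erefl).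
rewrite hnormZ_real exprMn ger0_norm ?invr_ge0 ?ler0n //; lra.
Qed.

Lemma level_minimizing_seq : (exists x1, f x1 = 1) ->
  exists xs : nat -> H, forall n, f (xs n) = 1 /\ hnorm (xs n) ^+ 2 < d + n.+1%:R^-1.
Proof.
move=> [x1 fx1].
suff /boolp.choice[xs xsP] n : exists x, f x = 1 /\ hnorm x ^+ 2 < d + n.+1%:R^-1 by exists xs.
have n0 : 0 < n.+1%:R^-1 :> R by rewrite invr_gt0.
have : has_inf level_sqr by split; [exists (hnorm x1 ^+ 2), x1 | exact: level_sqr_lbound].
by move=> /(inf_adherent n0)[_ [x fx <-] xd]; exists x.
Qed.

Hypothesis hc : hcomplete H.
Variable M : R.
Hypothesis f_bounded : forall x, `|f x| <= (M * hnorm x)%:C%C.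

Section MinimizingSequence.
Variable xs : nat -> H.
Hypothesis xsP : forall n, f (xs n) = 1 /\ hnorm (xs n) ^+ 2 < d + n.+1%:R^-1.

Lemma level_minimizing_cauchy : hcauchy xs.
Proof.
move=> e e0; have [N Ne] := invSn_lt (divr_gt0 (exprn_gt0 2 e0) (ltr0Sn R 3)).
exists N => m n Nm Nn; rewrite -(@ltr_pXn2r _ 2) ?nnegrE ?hnorm_ge0 ?ltW //.
have [fm mlt] := xsP m; have [fn nlt] := xsP n.
have := level_sqr_diff fm fn; have := Ne _ Nm; have := Ne _ Nn.
move: mlt nlt; move: (n.+1%:R^-1) (m.+1%:R^-1) (e ^+ 2) => a b E; lra.
Qed.

Lemma level_minimizing_limit x0 : hconv xs x0 -> f x0 = 1 /\ hnorm x0 ^+ 2 <= d.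
Proof.
move=> xsx0; split.
  apply: (cconv_unique (hconv_functional (raddfB f) f_bounded xsx0)).
  by apply: (eq_cconv _ (cconv_cst 1)) => n /=; rewrite (xsP n).1.
have d0 : 0 <= d.
  apply: lb_le_inf => [|_ [y _ <-]]; last exact: sqr_ge0.
  by exists (hnorm (xs 0) ^+ 2), (xs 0) => //; apply: (xsP 0).1.
apply/ler_addgt0Pr => e e0; pose eta := Num.min 1 (e / (2 * d + 6)).
have eta0 : 0 < eta by rewrite lt_min ltr01 divr_gt0 //; lra.
have eta1 : eta <= 1 by rewrite ge_min lexx.
have eta_e : (2 * d + 6) * eta <= e.
  by rewrite mulrC -ler_pdivlMr ?ge_min ?lexx ?orbT //; lra.
have [N1 N1P] := invSn_lt eta0; have [N2 N2P] := xsx0 _ eta0; pose n := maxn N1 N2.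
have {N1P}eps_n := N1P n (leq_maxl _ _); have {N2P}dn := N2P n (leq_maxr _ _).
have [_ xn] := xsP n.
(* ||x0||^2 <= ||xs n||^2 + 2 ||xs n|| dl + dl^2 with ||xs n|| <= d + 2, so errors
   below eta in both ||xs n||^2 - d and dl cost at most (2 d + 6) eta *)
have := hnormD_sqr (xs n) (x0 - xs n); rewrite addrC subrK.
have := Re_ip_le (xs n) (x0 - xs n); rewrite -hnormN opprB in dn.
have := hnorm_ge0 (xs n); have := hnorm_ge0 (x0 - xs n).
move: dn xn eps_n; move: (n.+1%:R^-1) (hnorm (xs n)) (hnorm (x0 - xs n)) => eps b dl.
move: (complex.Re _) => r dn xn eps_n dl0 b0 r_le x0E.
have b_le : b <= d + 2 by have := sqr_ge0 (b - 1); nra.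
have : b * dl <= (d + 2) * eta by apply: ler_pM => //; apply: ltW.
have : dl ^+ 2 <= eta by rewrite expr2; nra.
lra.
Qed.

End MinimizingSequence.

Lemma level_min_exists : (exists x1, f x1 = 1) ->
  exists2 x0, f x0 = 1 & forall x, f x = 1 -> hnorm x0 ^+ 2 <= hnorm x ^+ 2.
Proof.
move=> /level_minimizing_seq[xs xsP].
have [x0 xsx0] := hc (level_minimizing_cauchy xsP).
have [fx0 x0d] := level_minimizing_limit xsP xsx0.
by exists x0 => // x /level_sqr_ge; apply: le_trans.
Qed.

Theorem riesz_representation : exists z, forall x, f x = ip z x.
Proof.
have [[x1 fx1]|f0] := pselect (exists x1, f x1 != 0); last first.
  exists 0 => x; rewrite ip0l; have [//|fx] := eqVneq (f x) 0.
  by case: f0; exists x.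
have fx1' : f ((f x1)^-1 *: x1) = 1 by rewrite linearZ /= mulVf.
have [x0 fx0 x0min] := level_min_exists (ex_intro _ _ fx1').
have x0_perp y : f y = 0 -> ip x0 y = 0.
  move=> fy; apply: min_norm_orthogonal => t; apply: x0min.
  by rewrite raddfD /= linearZ /= fy mulr0 addr0.
have x0n : hnorm x0 ^+ 2 != 0.
  rewrite sqrf_eq0; apply/eqP => /hnorm_eq0 x00.
  by move: fx0; rewrite x00 raddf0 => /eqP; rewrite eq_sym oner_eq0.
exists ((hnorm x0 ^+ 2)^-1%:C%C *: x0) => x.
have := x0_perp (x - f x *: x0); rewrite raddfB /= linearZ /= fx0 mulr1 subrr => /(_ erefl).
rewrite raddfB /= linearZ /= ip_self => /eqP; rewrite subr_eq0 => /eqP x0x.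
by rewrite ipZl x0x conj_Creal ?complex_real // mulrCA -rmorphM mulVf // mulr1.
Qed.

End Riesz.

Lemma adjoint_adj (R : realType) (H : preHilbert R) (A : H -> H) :
  hcomplete H -> bounded_op A -> is_adjoint A (adj A).
Proof.
move=> hc hA; have [M _ AM] := bounded_op_pos hA.
suff /boolp.choice[B AB] y : exists z, forall x, ip y (A x) = ip z x.
  by rewrite (@adj_eq _ _ A B) // => x y; rewrite ip_conj AB -ip_conj.
apply: (@riesz_representation _ _ (fun x => ip y (A x)) _ hc (hnorm y * M)) => [a x z|x].
  by case: hA => -> _; rewrite ip_linear.
apply: le_trans (normr_ip_le _ _) _; rewrite lecR -mulrA.
by apply: ler_wpM2l; [apply: hnorm_ge0 | apply: AM].
Qed.

Section Kraus.
Variables (R : realType) (H : preHilbert R).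
Hypothesis hc : hcomplete H.
Variables (V : nat -> H -> H) (Phi : (H -> H) -> H -> H).
Hypothesis HK : kraus_rep V Phi.

Let V_bounded k : bounded_op (V k).
Proof. by case: HK. Qed.

Let V_adj k : is_adjoint (V k) (adj (V k)).
Proof. exact: adjoint_adj hc (V_bounded k). Qed.

Let kraus_unital x : hconv (fun n => \sum_(k < n) adj (V k) (V k x)) x.
Proof. by case: HK. Qed.

Let Phi_hconv B x : bounded_op B ->
  hconv (fun n => \sum_(k < n) adj (V k) (B (V k x))) (Phi B x).
Proof. by case: HK => _ _ PhiB /PhiB. Qed.

Lemma kraus_ip x y : cconv (fun n => \sum_(k < n) ip (V k x) (V k y)) (ip x y).
Proof.
apply: eq_cconv (hconv_ip x (kraus_unital y)) => n /=.
by rewrite raddf_sum; apply: eq_bigr => k _; rewrite V_adj.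
Qed.

Lemma Phi_ip B x y : bounded_op B ->
  cconv (fun n => \sum_(k < n) ip (V k x) (B (V k y))) (ip x (Phi B y)).
Proof.
move=> hB; apply: eq_cconv (hconv_ip x (Phi_hconv y hB)) => n /=.
by rewrite raddf_sum; apply: eq_bigr => k _; rewrite V_adj.
Qed.

Lemma Phi_adjoint B B' : bounded_op B -> bounded_op B' -> is_adjoint B B' ->
  is_adjoint (Phi B) (Phi B').
Proof.
move=> hB hB' BB' x y; rewrite ip_conj.
apply: (cconv_unique (cconv_conj (Phi_ip y x hB))).
apply: eq_cconv (Phi_ip x y hB') => n /=; rewrite rmorph_sum.
by apply: eq_bigr => k _ /=; rewrite -ip_conj BB'.
Qed.

Lemma adj_Phi A : bounded_op A -> adj (Phi A) = Phi (adj A).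
Proof.
move=> hA; have AA' := adjoint_adj hc hA.
exact/adj_eq/Phi_adjoint/AA'/(adjoint_bounded hA AA').
Qed.

Lemma intertwine_of_mult B B' : bounded_op B -> bounded_op B' -> is_adjoint B B' ->
  Phi (B' \o B) = Phi B' \o Phi B -> forall k x, B (V k x) = V k (Phi B x).
Proof.
move=> hB hB' BB' PhiBB k x; pose u := Phi B x.
pose t j := hnorm (B (V j x) - V j u) ^+ 2.
suff /(@sum_nneg_cconv0 _ t (fun j => sqr_ge0 _))/(_ k)/eqP :
    cconv (fun n => \sum_(j < n) (t j)%:C%C) 0.
  by rewrite sqrf_eq0 => /eqP/hnorm_eq0/eqP; rewrite subr_eq0 => /eqP.
have c1 := Phi_ip x x (bounded_op_comp hB' hB).
rewrite PhiBB /= -(Phi_adjoint hB hB' BB') -/u in c1.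
have c2 := Phi_ip u x hB; rewrite -/u in c2.
have := cconvD (cconvD (cconvD c1 (cconvN c2)) (cconvN (cconv_conj c2))) (kraus_ip u u).
rewrite -ip_conj subrr sub0r addNr => c; apply: eq_cconv c => n /=.
rewrite rmorph_sum -!sumrB -big_split /=; apply: eq_bigr => j _.
rewrite /t -ip_self ipBl !raddfB /= -BB' -ip_conj; ring.
Qed.

Lemma intertwine_of_commute B : bounded_op B ->
  (forall j k y, B (V j (adj (V k) y)) = V j (adj (V k) (B y))) ->
  forall k x, B (V k x) = V k (Phi B x).
Proof.
move=> hB Bcomm k x.
apply: (hconv_unique (hconv_op (bounded_op_comp hB (V_bounded k)) (kraus_unital x))).
apply: eq_hconv (hconv_op (V_bounded k) (Phi_hconv x hB)) => n /=.
rewrite !(bounded_op_sum (V_bounded k)) (bounded_op_sum hB).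
by apply: eq_bigr => j _; rewrite Bcomm.
Qed.

Lemma Phi_comp_of_intertwine B C : bounded_op B -> bounded_op C ->
  (forall k x, B (V k x) = V k (Phi B x)) -> Phi (C \o B) = Phi C \o Phi B.
Proof.
move=> hB hC BV; apply: funext => x.
apply: (hconv_unique (Phi_hconv x (bounded_op_comp hC hB))).
by apply: eq_hconv (Phi_hconv (Phi B x) hC) => n; apply: eq_bigr => k _ /=; rewrite BV.
Qed.

Let kraus_products T := exists j k, T = V j \o adj (V k).

Lemma mult_domain_commutant A : mult_domain Phi A -> commutant kraus_products A.
Proof.
case=> hA [mulA mulA']; have AA' := adjoint_adj hc hA.
have hA' := adjoint_bounded hA AA'; have A'A := is_adjoint_sym AA'.
rewrite adj_Phi // in mulA mulA'.
have AV := intertwine_of_mult hA hA' AA' mulA.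
have A'V := intertwine_of_mult hA' hA A'A mulA'.
split=> // _ [j [k ->]]; apply: funext => y /=; rewrite AV; congr (V j _).
have VA : adj (V k) \o A = Phi A \o adj (V k).
  apply: (adjoint_comp_eq A'A (V_adj k) (V_adj k) (Phi_adjoint hA' hA A'A)).
  by apply: funext => x; apply: A'V.
by rewrite -[RHS]/((adj (V k) \o A) y) VA.
Qed.

Lemma commutant_mult_domain A : commutant kraus_products A -> mult_domain Phi A.
Proof.
case=> hA Acomm; have AA' := adjoint_adj hc hA; have hA' := adjoint_bounded hA AA'.
have VV_adj j k : is_adjoint (V j \o adj (V k)) (V k \o adj (V j)).
  exact: is_adjoint_comp (V_adj j) (is_adjoint_sym (V_adj k)).
have AV : forall k x, A (V k x) = V k (Phi A x).
  apply: intertwine_of_commute => // j k y.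
  by rewrite -[LHS]/((A \o (V j \o adj (V k))) y) Acomm //; exists j, k.
have A'V : forall k x, adj A (V k x) = V k (Phi (adj A) x).
  apply: intertwine_of_commute => // j k y.
  have Akj : A \o (V k \o adj (V j)) = (V k \o adj (V j)) \o A by apply: Acomm; exists k, j.
  have := adjoint_comp_eq AA' (VV_adj k j) (VV_adj k j) AA' Akj.
  by move=> /(congr1 (fun F => F y)) /= ->.
split=> //; rewrite adj_Phi //.
by split; [apply: Phi_comp_of_intertwine hA hA' AV | apply: Phi_comp_of_intertwine hA' hA A'V].
Qed.

End Kraus.

Theorem mainTheorem2 (R : realType) (H : preHilbert R)
  (Hcomplete : hcomplete H) (Hsep : hseparable H)
  (V : nat -> H -> H) (Phi : (H -> H) -> (H -> H))
  (HK : kraus_rep V Phi) :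
  forall A : H -> H,
    mult_domain Phi A <->
    commutant (fun T : H -> H => exists j k : nat, T = V j \o adj (V k)) A.
Proof.
by move=> A; split; [apply: mult_domain_commutant | apply: commutant_mult_domain].
Qed.
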